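(* Let $n\ge2$ and let $(X,\delta)$ be the diversity on an $n$-point set $X$ with $\delta(A)=|A|-1$ for all nonempty $A\subseteq X$ (and $\delta(\emptyset)=0$). Then every embedding of $(X,\delta)$ into $\ell_1^k$ has distortion at least $(n-1)/k$.
   Context: The $\ell_1^k$ diversity is $(\mathbb{R}^k,\delta_1)$ with $\delta_1(A)=\sum_{i=1}^k\max\{|a_i-b_i|:a,b\in A\}$. A map $\phi:X_1\to X_2$ between diversities $(X_1,\delta_1)$, $(X_2,\delta_2)$ has distortion $c\ge1$ if there are $c_1,c_2>0$ with $c=c_1c_2$ and $\frac1{c_1}\delta_1(A)\le\delta_2(\phi(A))\le c_2\delta_1(A)$ for all finite $A\subseteq X_1$. *)

From mathcomp Require Import all_boot all_order all_algebra.
From mathcomp Require Import reals.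
Set Implicit Arguments. Unset Strict Implicit. Unset Printing Implicit Defensive.
Import Order.TTheory GRing.Theory Num.Theory.
Local Open Scope ring_scope.

(* A finite subset A of R^k is given by a sequence listing its elements;
   the value depends only on the set of elements. Empty max is 0. *)
Definition l1_div (R : realType) (k : nat) (A : seq 'rV[R]_k) : R :=
  \sum_(i < k) \big[Num.max/0]_(a <- A) \big[Num.max/0]_(b <- A) `|a 0 i - b 0 i|.

Definition card_div (R : realType) (n : nat) (A : {set 'I_n}) : R :=
  (#|A|.-1)%:R.

Definition has_distortion (R : realType) (n k : nat) (phi : 'I_n -> 'rV[R]_k)
  (c : R) : Prop :=
  1 <= c /\
  exists c1 c2 : R, 0 < c1 /\ 0 < c2 /\ c = c1 * c2 /\
    forall A : {set 'I_n},
      card_div R A / c1 <= l1_div [seq phi x | x in A] /\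
      l1_div [seq phi x | x in A] <= c2 * card_div R A.

From mathcomp Require Import all_boot all_order all_algebra.
From mathcomp Require Import reals.
Import Order.TTheory GRing.Theory Num.Theory.
Local Open Scope ring_scope.

(* A two-point set has diversity 1, so the upper bound of the distortion forces
   every coordinate of phi to vary by at most c2 over the n points; the image of
   the whole set then has l_1^k diversity at most k c2, whereas the lower bound
   demands at least (n - 1) / c1. *)

Section L1Diversity.
Variables (R : realType) (k : nat).
Implicit Type A : seq 'rV[R]_k.

Lemma coord_spread_le_l1_div A (i : 'I_k) a b :
  a \in A -> b \in A -> `|a 0 i - b 0 i| <= l1_div A.
Proof.
move=> aA bA; rewrite /l1_div (bigD1 i) //= -[leLHS]addr0 lerD //.
- apply: le_trans (le_bigmax_seq _ a _ _ aA _) => //=.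
  exact: le_bigmax_seq _ b _ _ bA _.
- by apply: sumr_ge0 => j _; apply: bigmax_ge_id.
Qed.

Lemma l1_div_le_spread A (M : R) :
  0 <= M -> (forall i a b, a \in A -> b \in A -> `|a 0 i - b 0 i| <= M) ->
  l1_div A <= k%:R * M.
Proof.
move=> M_ge0 spreadM; rewrite mulr_natl -[k in _ *+ k]card_ord -sumr_const.
apply: ler_sum => i _; rewrite big_seq; apply: bigmax_le => // a aA.
by rewrite big_seq; apply: bigmax_le => // b bA; apply: spreadM.
Qed.

End L1Diversity.

Lemma card_div_set2 (R : realType) (n : nat) (x y : 'I_n) :
  card_div R [set x; y] <= 1.
Proof. by rewrite /card_div cards2; case: (x != y). Qed.

Lemma card_div_setT (R : realType) (n : nat) :
  card_div R [set: 'I_n] = (n.-1)%:R.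
Proof. by rewrite /card_div cardsT card_ord. Qed.

Section Distortion.
Variables (R : realType) (n k : nat) (phi : 'I_n -> 'rV[R]_k) (c1 c2 : R).
Hypothesis phi_bounds : forall A : {set 'I_n},
  card_div R A / c1 <= l1_div [seq phi x | x in A] /\
  l1_div [seq phi x | x in A] <= c2 * card_div R A.

Lemma coord_spread_le_expansion (i : 'I_k) x y :
  0 <= c2 -> `|phi x 0 i - phi y 0 i| <= c2.
Proof.
move=> c2_ge0; have [_ upper] := phi_bounds [set x; y].
apply: le_trans (le_trans upper _).
  by apply: coord_spread_le_l1_div; apply: map_f; rewrite mem_enum !inE eqxx ?orbT.
by rewrite -[leRHS]mulr1 ler_wpM2l // card_div_set2.
Qed.

Lemma card_le_dim_mul_distortion :
  0 < c1 -> 0 <= c2 -> (n.-1)%:R <= k%:R * (c1 * c2).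
Proof.
move=> c1_gt0 c2_ge0; have [lower _] := phi_bounds [set: 'I_n].
have spread : l1_div [seq phi x | x in [set: 'I_n]] <= k%:R * c2.
  apply: l1_div_le_spread => // i _ _ /imageP[x _ ->] /imageP[y _ ->].
  exact: coord_spread_le_expansion.
move: (le_trans lower spread); rewrite card_div_setT ler_pdivrMr //.
by rewrite [c1 * c2]mulrC mulrA.
Qed.

End Distortion.

Theorem proposition15 (R : realType) (n k : nat) (hn : (2 <= n)%N)
  (phi : 'I_n -> 'rV[R]_k) (c : R) :
  has_distortion phi c -> (n.-1)%:R / k%:R <= c.
Proof.
(* The bound holds for every n. *)
move=> [_ [c1 [c2 [c1_gt0 [c2_gt0 [-> bounds]]]]]].
have [->|k_gt0] := posnP k.
  by rewrite invr0 mulr0 mulr_ge0 ?ltW.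
rewrite ler_pdivrMr ?ltr0n // mulrC.
exact: card_le_dim_mul_distortion bounds c1_gt0 (ltW c2_gt0).
Qed.
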